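(* Suppose $\mathcal{F}=\{X;f_\lambda\mid\lambda\in\Lambda\}$ is a minimal IFS on an infinite compact metric space $X$ and $\mathcal{F}$ has some non-periodic regularly recurrent point. Then there exist a sequence $\alpha=(p_1,p_2,\dots)$ of prime numbers and a continuous surjective map $\pi:X\to\Delta_\alpha$ such that $g_\alpha\circ\pi=\pi\circ f_\lambda$ for all $\lambda\in\Lambda$. Moreover, $\pi^{-1}(\pi(x))=\{x\}$ for every regularly recurrent point $x\in X$.
   Context: $\Lambda$ is a finite nonempty set, $f_\lambda:X\to X$ continuous. $\Lambda^{\mathbb{Z}_+}$ is the set of sequences $\sigma=(\lambda_1,\lambda_2,\dots)$ in $\Lambda$, $\mathcal{F}_{\sigma_n}=f_{\lambda_n}\circ\cdots\circ f_{\lambda_1}$, $\mathcal{F}_{\sigma_0}=\mathrm{id}$. A nonempty closed $M\subseteq X$ is $\mathcal{F}^n$-minimal if $\mathcal{F}_{\sigma_n}(M)=M$ for all $\sigma$ and $\mathcal{F}_{\sigma_n}(A)\ne A$ for every nonempty proper $A\subsetneq M$ and every $\sigma$. $\mathcal{F}$ is minimal if the only $\mathcal{F}^1$-minimal set is $X$ (equivalently, every point has a dense set of iterates $f_{\lambda_k}\circ\cdots\circ f_{\lambda_1}(x)$, $k>0$). A point $x$ is regularly recurrent if for every neighborhood $U$ of $x$ there is $n\ge1$ with $\mathcal{F}_{\sigma_{ni}}(x)\in U$ for all $i\ge0$ and all $\sigma$. A point is periodic if some finite composition $f_{\lambda_n}\circ\cdots\circ f_{\lambda_1}$ fixes it.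 For $\alpha=(j_1,j_2,\dots)$ with integers $j_i\ge2$, $\Delta_\alpha$ is the set of sequences $(r_1,r_2,\dots)$ with $r_i\in\{0,\dots,j_i-1\}$, with metric $d_\alpha(r,s)=\sum_i\delta(r_i,s_i)/2^i$ ($\delta(a,b)=1$ if $a\ne b$, else $0$), and $g_\alpha:\Delta_\alpha\to\Delta_\alpha$ is the adding machine map $r\mapsto r+(1,0,0,\dots)$, addition being coordinatewise with carry (first coordinate mod $j_1$, carry into the second coordinate taken mod $j_2$, etc.). *)

From Stdlib Require Import Reals Lra Lia List Arith.
Open Scope R_scope.

Record is_metric {X : Type} (d : X -> X -> R) : Prop := {
  metric_nonneg : forall x y, 0 <= d x y;
  metric_eq0 : forall x y, d x y = 0 <-> x = y;
  metric_sym : forall x y, d x y = d y x;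
  metric_triangle : forall x y z, d x z <= d x y + d y z
}.

Definition is_open {X : Type} (d : X -> X -> R) (U : X -> Prop) : Prop :=
  forall x, U x -> exists eps, eps > 0 /\ forall y, d x y < eps -> U y.

Definition compact_space {X : Type} (d : X -> X -> R) : Prop :=
  forall (I : Type) (U : I -> X -> Prop),
    (forall i, is_open d (U i)) -> (forall x, exists i, U i x) ->
    exists l : list I, forall x, exists i, In i l /\ U i x.

Definition infinite_type (X : Type) : Prop :=
  ~ exists l : list X, forall x : X, In x l.

Definition finite_type (L : Type) : Prop :=
  exists l : list L, forall a : L, In a l.

Definition continuous_map {X Y : Type} (dX : X -> X -> R) (dY : Y -> Y -> R)
  (f : X -> Y) : Prop :=
  forall x eps, eps > 0 -> exists delta, delta > 0 /\
    forall y, dX x y < delta -> dY (f x) (f y) < eps.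

(** F_{sigma_n} = f_{lambda_n} o ... o f_{lambda_1}; here sigma 0 = lambda_1. *)
Fixpoint iterF {X L : Type} (f : L -> X -> X) (sigma : nat -> L) (n : nat) (x : X) : X :=
  match n with
  | O => x
  | S m => f (sigma m) (iterF f sigma m x)
  end.

Definition ifs_minimal {X L : Type} (d : X -> X -> R) (f : L -> X -> X) : Prop :=
  forall x y eps, eps > 0 ->
    exists (sigma : nat -> L) (k : nat), (k > 0)%nat /\ d (iterF f sigma k x) y < eps.

Definition regularly_recurrent {X L : Type} (d : X -> X -> R) (f : L -> X -> X) (x : X) : Prop :=
  forall eps, eps > 0 -> exists n : nat, (n >= 1)%nat /\
    forall (i : nat) (sigma : nat -> L), d (iterF f sigma (n * i) x) x < eps.

Definition periodic_point {X L : Type} (f : L -> X -> X) (x : X) : Prop :=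
  exists (sigma : nat -> L) (n : nat), (n >= 1)%nat /\ iterF f sigma n x = x.

(** Adding machine Delta_alpha: sequences r (indexed from 0) with r i < alpha i. *)
Definition in_Delta (alpha : nat -> nat) (r : nat -> nat) : Prop :=
  forall i, (r i < alpha i)%nat.

Definition delta_term (r s : nat -> nat) (i : nat) : R :=
  (if Nat.eqb (r i) (s i) then 0 else 1) / 2 ^ (S i).

Lemma delta_term_bound (r s : nat -> nat) (i : nat) :
  0 <= delta_term r s i <= 1 * (1/2) ^ i.
Proof.
  unfold delta_term.
  assert (H2 : 0 < 2 ^ S i) by (apply pow_lt; lra).
  assert (E : 1 * (1/2) ^ i = 2 / 2 ^ S i).
  { rewrite Rmult_1_l. unfold Rdiv. rewrite pow_mult_distr_l_depr || idtac.
    simpl. rewrite Rinv_mult, <- Rmult_assoc, Rinv_r, Rmult_1_l by lra.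
    rewrite <- pow_inv. rewrite Rmult_1_l. reflexivity. }
  rewrite E. destruct (Nat.eqb (r i) (s i)); split; unfold Rdiv;
    try apply Rmult_le_pos; try lra;
    try (left; apply Rinv_0_lt_compat; lra);
    apply Rmult_le_compat_r; try lra; left; apply Rinv_0_lt_compat; lra.
Qed.

Lemma geom_half_cv : { l : R | Un_cv (fun N => sum_f_R0 (fun n => 1 * (1/2) ^ n) N) l }.
Proof.
  exists (/ (1 - 1/2)). apply (GP_infinite (1/2)). rewrite Rabs_right; lra.
Qed.

(** d_alpha(r,s) = sum_i delta(r_i,s_i)/2^i (paper indexing from 1). *)
Definition d_alpha (r s : nat -> nat) : R :=
  proj1_sig (Rseries_CV_comp (delta_term r s) (fun n => 1 * (1/2) ^ n)
    (delta_term_bound r s) geom_half_cv).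

(** The adding machine map: add 1 to coordinate 0 with carry; coordinate i
    changes iff all earlier coordinates are maximal (alpha k - 1). *)
Definition g_alpha (alpha : nat -> nat) (r : nat -> nat) : nat -> nat :=
  fun i => if forallb (fun k => Nat.eqb (r k) (alpha k - 1)) (seq 0 i)
           then ((r i + 1) mod alpha i)%nat else r i.

Definition is_prime_nat (p : nat) : Prop := Znumtheory.prime (Z.of_nat p).

From Stdlib Require Import Reals List.
From Stdlib Require Import Lra Lia ZArith Znumtheory ClassicalEpsilon Classical FunctionalExtensionality.

(* Fix the non-periodic regularly recurrent point x0 and, for m >= 1 and k < m, let
   C_k^m be the closure of the iterates of x0 at times congruent to k mod m.  By
   minimality these m closed sets cover X; call m a period when they are pairwise
   disjoint.  They are then clopen, and every f_lam maps C_k^m into C_{k+1}^m.  Periods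
   are closed under lcm and divisors, and regular recurrence of the non-periodic x0
   produces arbitrarily large ones: if iterates at multiples of n stay in a small ball
   around x0, every period E has the proper multiple lcm(E, e), where e | E n is a
   period whose class C_0^e lies in that ball while f^E(x0) does not.  So the
   periods contain a divisibility chain 1 = M_0 | M_1 | ... with prime quotients
   p_N = M_{N+1} / M_N, cofinal among all periods.  The index of the class of x mod
   M_N is a compatible system of residues; its mixed-radix digits form pi(x).  Maps
   add 1 to every residue, i.e. act as the odometer; clopenness gives continuity,
   compactness (nested closed classes) gives surjectivity, and at a regularly
   recurrent point x the classes of x modulo multiples of its return times shrink
   to x, which gives the injectivity. *)

Open Scope nat_scope.

Lemma mod_add_compat_r a b c m : a mod m = b mod m -> (a + c) mod m = (b + c) mod m.
Proof. intro H. rewrite (Nat.Div0.add_mod a), (Nat.Div0.add_mod b), H. reflexivity. Qed.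

Lemma mod_add_cancel_r a b c m : (a + c) mod m = (b + c) mod m -> a mod m = b mod m.
Proof.
  intro H. destruct m as [|m].
  - rewrite !Nat.mod_0_r in *. lia.
  - assert (Ea : a + c * S m = (a + c) + (c * S m - c)) by (rewrite Nat.mul_succ_r; lia).
    assert (Eb : b + c * S m = (b + c) + (c * S m - c)) by (rewrite Nat.mul_succ_r; lia).
    rewrite <- (Nat.Div0.mod_add a c), <- (Nat.Div0.mod_add b c), Ea, Eb.
    apply mod_add_compat_r. exact H.
Qed.

Lemma mod_mod_divide a m t : Nat.divide a m -> (t mod m) mod a = t mod a.
Proof.
  intros [q ->].
  rewrite (Nat.div_mod_eq t (q * a)) at 2.
  replace (q * a * (t / (q * a)) + t mod (q * a))
    with (t mod (q * a) + (q * (t / (q * a))) * a) by nia.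
  rewrite Nat.Div0.mod_add. reflexivity.
Qed.

Lemma eq_mod_divide a m t k : Nat.divide a m -> t mod m = k mod m -> t mod a = k mod a.
Proof. intros Ha H. rewrite <- (mod_mod_divide a m t), <- (mod_mod_divide a m k), H by exact Ha. reflexivity. Qed.

Lemma prime_nat_ge2 p : is_prime_nat p -> 2 <= p.
Proof. intro H. apply prime_ge_2 in H. lia. Qed.

Lemma ex_prime_divisor n : 2 <= n -> exists p, is_prime_nat p /\ Nat.divide p n.
Proof.
  induction n as [n IH] using (well_founded_induction lt_wf). intro Hn.
  destruct (prime_dec (Z.of_nat n)) as [Hp|Hp].
  - exists n. split; [exact Hp | apply Nat.divide_refl].
  - destruct (not_prime_divide (Z.of_nat n) ltac:(lia) Hp) as [z [Hz [w Hw]]].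
    destruct (IH (Z.to_nat z) ltac:(lia) ltac:(lia)) as [p [Hpp Hpz]].
    exists p. split; [exact Hpp|]. apply (Nat.divide_trans _ _ _ Hpz).
    exists (Z.to_nat w). nia.
Qed.

Open Scope R_scope.

Lemma ex_uniform_radius (m : nat) (P : nat -> R -> Prop) :
  (forall j e e', P j e -> 0 < e' <= e -> P j e') ->
  (forall j, (j < m)%nat -> exists e, e > 0 /\ P j e) ->
  exists e, e > 0 /\ forall j, (j < m)%nat -> P j e.
Proof.
  intros Hmon. induction m as [|m IH]; intro H.
  - exists 1. split; [lra | intros; lia].
  - destruct IH as [e1 [He1 H1]]. { intros j Hj. apply H. lia. }
    destruct (H m ltac:(lia)) as [e2 [He2 H2]].
    exists (Rmin e1 e2). split; [apply Rmin_glb_lt; lra|].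
    intros j Hj. destruct (Nat.eq_dec j m) as [->|Hne].
    + apply (Hmon m e2); [exact H2 | split; [apply Rmin_glb_lt; lra | apply Rmin_r]].
    + apply (Hmon j e1); [apply H1; lia | split; [apply Rmin_glb_lt; lra | apply Rmin_l]].
Qed.

Lemma pigeonhole_small (m : nat) (Q : nat -> R -> Prop) :
  (forall j e e', Q j e -> e <= e' -> Q j e') ->
  (forall e, e > 0 -> exists j, (j < m)%nat /\ Q j e) ->
  exists j, (j < m)%nat /\ forall e, e > 0 -> Q j e.
Proof.
  intros Hmon H. apply NNPP. intro Hn.
  destruct (ex_uniform_radius m (fun j e => ~ Q j e)) as [e [He He']].
  - intros j e e' Hq [_ Hle] Hq'. apply Hq. exact (Hmon j e' e Hq' Hle).
  - intros j Hj. apply NNPP. intro Hc. apply Hn. exists j. split; [exact Hj|].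
    intros e He. apply NNPP. intro Hq. apply Hc. exists e. auto.
  - destruct (H e He) as [j [Hj Hq]]. exact (He' j Hj Hq).
Qed.

Open Scope nat_scope.

Fixpoint partial_prod (alpha : nat -> nat) (N : nat) : nat :=
  match N with 0 => 1 | S N => partial_prod alpha N * alpha N end.

Lemma partial_prod_pos alpha N : (forall i, 1 <= alpha i) -> 1 <= partial_prod alpha N.
Proof. intro H. induction N; simpl; [lia|]. specialize (H N). nia. Qed.

Section CofinalChain.
Variable P : nat -> Prop.
Hypothesis P_one : P 1.
Hypothesis P_pos : forall a, P a -> 1 <= a.
Hypothesis P_lcm : forall a b, P a -> P b -> P (Nat.lcm a b).
Hypothesis P_grow : forall a, P a -> exists b, P b /\ Nat.divide a b /\ a < b.

Lemma P_grow_absorb j a : exists b, P a ->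
  P b /\ Nat.divide a b /\ a < b /\ (P j -> Nat.divide j b).
Proof.
  destruct (classic (P a)) as [Ha|Ha]; [|exists 0; tauto].
  destruct (classic (P j)) as [Hj|Hj].
  - pose proof (P_lcm a j Ha Hj) as Haj.
    destruct (P_grow _ Haj) as [b [Hb [Hdiv Hlt]]].
    pose proof (Nat.divide_pos_le a (Nat.lcm a j) (P_pos _ Haj) (Nat.divide_lcm_l a j)).
    exists b. intros _. repeat split; auto; try lia.
    + exact (Nat.divide_trans _ _ _ (Nat.divide_lcm_l a j) Hdiv).
    + intros _. exact (Nat.divide_trans _ _ _ (Nat.divide_lcm_r a j) Hdiv).
  - destruct (P_grow a Ha) as [b Hb]. exists b. tauto.
Qed.

Lemma ex_cofinal_chain : exists D : nat -> nat, D 0 = 1 /\ (forall j, P (D j)) /\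
  (forall j, Nat.divide (D j) (D (S j)) /\ D j < D (S j)) /\
  (forall a, P a -> exists j, Nat.divide a (D j)).
Proof.
  destruct (choice (fun ja : nat * nat => fun b => P (snd ja) ->
      P b /\ Nat.divide (snd ja) b /\ snd ja < b /\ (P (fst ja) -> Nat.divide (fst ja) b)))
    as [next Hnext].
  { intros [j a]. apply P_grow_absorb. }
  set (D := fix D j := match j with 0 => 1 | S j => next (j, D j) end).
  assert (HP : forall j, P (D j)) by (induction j; [exact P_one | apply (Hnext (j, D j)), IHj]).
  exists D. split; [reflexivity|]. split; [exact HP|]. split.
  - intro j. destruct (Hnext (j, D j) (HP j)) as [_ [H1 [H2 _]]]. auto.
  - intros a Ha. exists (S a). apply (Hnext (a, D a) (HP a)). exact Ha.
Qed.
End CofinalChain.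

Definition prime_factor (n : nat) : nat :=
  epsilon (inhabits 0) (fun p => 2 <= n -> is_prime_nat p /\ Nat.divide p n).

Lemma prime_factor_spec n : 2 <= n -> is_prime_nat (prime_factor n) /\ Nat.divide (prime_factor n) n.
Proof.
  intro Hn. refine (epsilon_spec (inhabits 0)
    (fun p => 2 <= n -> is_prime_nat p /\ Nat.divide p n) _ Hn).
  destruct (ex_prime_divisor n Hn) as [p Hp]. exists p. auto.
Qed.

Lemma prime_factor_quotient M n : Nat.divide M n -> M < n -> 1 <= M ->
  n = n / M * M /\ is_prime_nat (prime_factor (n / M)) /\ Nat.divide (prime_factor (n / M)) (n / M).
Proof.
  intros [q ->] HMn HM. rewrite Nat.div_mul by lia.
  split; [reflexivity|]. apply prime_factor_spec. nia.
Qed.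

Section PrimeRefinement.
Variable D : nat -> nat.
Hypothesis D_zero : D 0 = 1.
Hypothesis D_divide : forall j, Nat.divide (D j) (D (S j)).
Hypothesis D_lt : forall j, D j < D (S j).

(* The state (M, j) satisfies D j | M | D (j+1), M < D (j+1); each step multiplies M by a
   prime factor of D (j+1) / M and moves on to j+1 once M reaches D (j+1). *)
Fixpoint refine_state (N : nat) : nat * nat :=
  match N with
  | O => (1, 0)
  | S N => let (M, j) := refine_state N in
           let M' := M * prime_factor (D (S j) / M) in
           (M', if Nat.eqb M' (D (S j)) then S j else j)
  end.

Definition refine_prime (N : nat) : nat :=
  prime_factor (D (S (snd (refine_state N))) / fst (refine_state N)).

Lemma refine_state_S N :
  fst (refine_state (S N)) = fst (refine_state N) * refine_prime N /\
  snd (refine_state (S N)) = if Nat.eqb (fst (refine_state (S N))) (D (S (snd (refine_state N))))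
                             then S (snd (refine_state N)) else snd (refine_state N).
Proof. unfold refine_prime. cbn [refine_state]. destruct (refine_state N). auto. Qed.

Lemma D_pos j : 1 <= D j.
Proof. induction j; [rewrite D_zero; lia | specialize (D_lt j); lia]. Qed.

Lemma refine_state_inv N :
  let (M, j) := refine_state N in
  Nat.divide (D j) M /\ Nat.divide M (D (S j)) /\ M < D (S j) /\ 1 <= M /\
  is_prime_nat (prime_factor (D (S j) / M)).
Proof.
  induction N as [|N IH].
  - cbn [refine_state]. pose proof (D_lt 0) as H0. rewrite D_zero in *.
    assert (Hp : is_prime_nat (prime_factor (D 1 / 1)))
      by (apply prime_factor_quotient; auto using Nat.divide_1_l).
    exact (conj (Nat.divide_refl 1) (conj (Nat.divide_1_l _) (conj H0 (conj (le_n 1) Hp)))).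
  - destruct (refine_state_S N) as [E1 E2]. unfold refine_prime in *.
    destruct (refine_state N) as [M j]. cbn [fst snd] in *.
    destruct IH as [H1 [H2 [H3 [H4 _]]]].
    destruct (prime_factor_quotient M (D (S j)) H2 H3 H4) as [Hq [Hp [w Hw]]].
    set (q := D (S j) / M) in *. pose proof (prime_nat_ge2 _ Hp).
    destruct (refine_state (S N)) as [M' j']. cbn [fst snd] in *. subst M'.
    assert (HMd : Nat.divide (M * prime_factor q) (D (S j))).
    { exists w. rewrite Hq, Hw at 1. ring. }
    destruct (Nat.eqb_spec (M * prime_factor q) (D (S j))) as [Eq|Ne]; subst j'.
    + rewrite Eq. pose proof (D_pos (S j)) as HDpos.
      assert (Hp' : is_prime_nat (prime_factor (D (S (S j)) / D (S j))))
        by (apply prime_factor_quotient; auto using D_divide, D_lt).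
      exact (conj (Nat.divide_refl _) (conj (D_divide _) (conj (D_lt _) (conj HDpos Hp')))).
    + pose proof (Nat.divide_pos_le _ _ (D_pos (S j)) HMd).
      assert (HM'pos : 1 <= M * prime_factor q) by nia.
      assert (Hp' : is_prime_nat (prime_factor (D (S j) / (M * prime_factor q))))
        by (apply prime_factor_quotient; auto; lia).
      refine (conj _ (conj HMd (conj _ (conj HM'pos Hp')))); [|lia].
      apply (Nat.divide_trans _ _ _ H1). apply Nat.divide_factor_l.
Qed.

Lemma refine_prime_prime N : is_prime_nat (refine_prime N).
Proof.
  pose proof (refine_state_inv N) as H. unfold refine_prime.
  destruct (refine_state N). apply H.
Qed.

Lemma refine_state_fst N : fst (refine_state N) = partial_prod refine_prime N.
Proof. induction N; [reflexivity|]. rewrite (proj1 (refine_state_S N)), IHN. reflexivity. Qed.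

Lemma refine_state_snd_reach j : exists N, j <= snd (refine_state N).
Proof.
  induction j as [|j [N0 HN0]]; [exists 0; lia|].
  destruct (Nat.eq_dec (snd (refine_state N0)) j) as [Eq|Ne]; [|exists N0; lia].
  assert (Hprogress : forall K, S j <= snd (refine_state (N0 + K)) \/
      (snd (refine_state (N0 + K)) = j /\ K < fst (refine_state (N0 + K)))).
  { induction K as [|K IH].
    - right. rewrite Nat.add_0_r, refine_state_fst. split; [exact Eq|].
      apply partial_prod_pos. intro i. pose proof (prime_nat_ge2 _ (refine_prime_prime i)). lia.
    - rewrite Nat.add_succ_r. destruct (refine_state_S (N0 + K)) as [E1 E2].
      pose proof (prime_nat_ge2 _ (refine_prime_prime (N0 + K))).
      destruct (Nat.eqb _ _); destruct IH as [IH|[IH1 IH2]]; rewrite E2; rewrite ?IH1.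
      all: first [left; lia | right; split; [reflexivity | rewrite E1; nia]]. }
  destruct (Hprogress (D (S j))) as [H|[H1 H2]]; [exists (N0 + D (S j)); exact H|].
  exfalso. pose proof (refine_state_inv (N0 + D (S j))) as Hinv.
  destruct (refine_state (N0 + D (S j))) as [M j']. cbn in H1, H2. subst j'. lia.
Qed.
End PrimeRefinement.

Lemma ex_prime_refinement (D : nat -> nat) : D 0 = 1 ->
  (forall j, Nat.divide (D j) (D (S j)) /\ D j < D (S j)) ->
  exists alpha, (forall i, is_prime_nat (alpha i)) /\
    (forall N, exists j, Nat.divide (partial_prod alpha N) (D j)) /\
    (forall j, exists N, Nat.divide (D j) (partial_prod alpha N)).
Proof.
  intros H0 HD. exists (refine_prime D).
  assert (Hdiv : forall j, Nat.divide (D j) (D (S j))) by apply HD.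
  assert (Hlt : forall j, D j < D (S j)) by apply HD.
  split; [exact (refine_prime_prime D H0 Hdiv Hlt)|]. split.
  - intro N. pose proof (refine_state_inv D H0 Hdiv Hlt N) as Hinv.
    rewrite <- (refine_state_fst D). destruct (refine_state D N) as [M j].
    exists (S j). apply Hinv.
  - intro j. destruct (refine_state_snd_reach D H0 Hdiv Hlt j) as [N HN]. exists N.
    pose proof (refine_state_inv D H0 Hdiv Hlt N) as Hinv.
    rewrite <- (refine_state_fst D). destruct (refine_state D N) as [M j']. cbn in *.
    refine (Nat.divide_trans _ _ _ _ (proj1 Hinv)). clear - HN Hdiv.
    induction HN; [apply Nat.divide_refl | exact (Nat.divide_trans _ _ _ IHHN (Hdiv m))].
Qed.

Section Digits.
Variables (alpha K : nat -> nat).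
Hypothesis alpha_ge2 : forall i, 2 <= alpha i.
Hypothesis K_lt : forall N, K N < partial_prod alpha N.
Hypothesis K_compat : forall N, K N = K (S N) mod partial_prod alpha N.

Local Notation M := (partial_prod alpha).
Let M_pos N : 1 <= M N.
Proof. apply partial_prod_pos. intro i. specialize (alpha_ge2 i). lia. Qed.

Definition digit (i : nat) : nat := K (S i) / M i.

Lemma residue_S i : K (S i) = digit i * M i + K i.
Proof. unfold digit. rewrite (K_compat i), Nat.mul_comm. apply Nat.div_mod_eq. Qed.

Lemma digit_lt i : digit i < alpha i.
Proof. apply Nat.Div0.div_lt_upper_bound. pose proof (K_lt (S i)). simpl in H. lia. Qed.

Lemma digits_max_iff i : (forall j, j < i -> digit j = alpha j - 1) <-> K i = M i - 1.
Proof.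
  induction i as [|i IH].
  - pose proof (K_lt 0). simpl in *. split; intros; lia.
  - pose proof (residue_S i) as E. pose proof (digit_lt i). pose proof (K_lt i).
    pose proof (M_pos i). change (M (S i)) with (M i * alpha i). split.
    + intro Hmax. assert (HK : K i = M i - 1) by (apply IH; intros; apply Hmax; lia).
      rewrite E, HK, (Hmax i) by lia. destruct (alpha i); nia.
    + intro HK. assert (Hd : digit i = alpha i - 1).
      { destruct (Nat.eq_dec (digit i) (alpha i - 1)) as [|Hne]; [assumption|]. exfalso.
        assert (digit i * M i <= (alpha i - 2) * M i) by (apply Nat.mul_le_mono_r; lia).
        pose proof (alpha_ge2 i). destruct (alpha i) as [|[|a]]; [lia|lia|].
        replace (S (S a) - 2) with a in * by lia. nia. }
      assert (HKi : K i = M i - 1) by (rewrite Hd in E; destruct (alpha i); nia).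
      intros j Hj. destruct (Nat.eq_dec j i) as [->|]; [exact Hd|]. apply IH; [exact HKi | lia].
Qed.

(* Adding one to the residues is the odometer on the digits: the carry into digit i
   happens exactly when all lower digits are maximal. *)
Lemma digit_succ i (K' : nat -> nat) (HK' : forall N, K' N = (K N + 1) mod M N) :
  g_alpha alpha digit i = K' (S i) / M i.
Proof.
  unfold g_alpha. rewrite HK'.
  pose proof (residue_S i) as E. pose proof (digit_lt i). pose proof (K_lt i).
  pose proof (M_pos i). change (M (S i)) with (M i * alpha i).
  destruct (forallb (fun k => Nat.eqb (digit k) (alpha k - 1)) (seq 0 i)) eqn:Hf.
  - assert (HK : K i = M i - 1).
    { apply digits_max_iff. intros j Hj. rewrite forallb_forall in Hf.
      apply Nat.eqb_eq, Hf, in_seq. lia. }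
    replace (K (S i) + 1) with ((digit i + 1) * M i) by lia.
    destruct (Nat.eq_dec (digit i + 1) (alpha i)) as [Eq|Neq].
    + rewrite Eq, Nat.Div0.mod_same, (Nat.mul_comm (alpha i)), Nat.Div0.mod_same.
      rewrite Nat.Div0.div_0_l. reflexivity.
    + rewrite (Nat.mod_small (digit i + 1)), Nat.mod_small by nia.
      rewrite Nat.div_mul by lia. reflexivity.
  - assert (HK : K i <> M i - 1).
    { intro HK. pose proof (proj2 (digits_max_iff i) HK) as Hmax.
      enough (forallb (fun k => Nat.eqb (digit k) (alpha k - 1)) (seq 0 i) = true) by congruence.
      apply forallb_forall. intros j Hj. apply in_seq in Hj. apply Nat.eqb_eq, Hmax. lia. }
    assert (digit i * M i <= (alpha i - 1) * M i) by (apply Nat.mul_le_mono_r; lia).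
    rewrite E, <- Nat.add_assoc, Nat.mod_small by (destruct (alpha i); nia).
    rewrite Nat.div_add_l, Nat.div_small by lia. lia.
Qed.
End Digits.

Lemma residues_of_digits (alpha r : nat -> nat) :
  (forall i, 1 <= alpha i) -> in_Delta alpha r ->
  exists K : nat -> nat, (forall N, K N < partial_prod alpha N) /\
    (forall N, K (S N) = K N + r N * partial_prod alpha N).
Proof.
  intros Ha Hr.
  exists (fix K N := match N with O => O | S N => K N + r N * partial_prod alpha N end).
  split; [|reflexivity].
  induction N as [|N IH]; cbn [partial_prod]; [lia|].
  assert (r N * partial_prod alpha N <= (alpha N - 1) * partial_prod alpha N)
    by (apply Nat.mul_le_mono_r; specialize (Hr N); lia).
  specialize (Ha N). destruct (alpha N); nia.
Qed.

Open Scope R_scope.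

Lemma half_pow_pos n : 0 < (1/2)^n.
Proof. apply pow_lt. lra. Qed.

Lemma half_pow_le N K : (N <= K)%nat -> (1/2)^K <= (1/2)^N.
Proof.
  intro H. replace K with (N + (K - N))%nat by lia. induction (K - N)%nat as [|j IH].
  - rewrite Nat.add_0_r. lra.
  - rewrite Nat.add_succ_r. simpl. pose proof (half_pow_pos (N + j)). lra.
Qed.

Lemma half_pow_small eps : eps > 0 -> exists N, (1/2)^N < eps.
Proof.
  intro He. destruct (pow_lt_1_zero (1/2) ltac:(rewrite Rabs_right; lra) eps He) as [N HN].
  exists N. specialize (HN N (Nat.le_refl N)).
  rewrite Rabs_right in HN; [exact HN | apply Rle_ge, Rlt_le, half_pow_pos].
Qed.

Lemma delta_term_le r s i : delta_term r s i <= (1/2)^(S i).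
Proof.
  unfold delta_term. replace ((1/2)^(S i)) with (1 / 2^(S i))
    by (unfold Rdiv; rewrite !Rmult_1_l, pow_inv; reflexivity).
  assert (0 < 2^(S i)) by (apply pow_lt; lra).
  destruct (Nat.eqb (r i) (s i)); unfold Rdiv; apply Rmult_le_compat_r;
    try (left; apply Rinv_0_lt_compat; lra); lra.
Qed.

Lemma delta_term_eq r s i : r i = s i -> delta_term r s i = 0.
Proof. intro H. unfold delta_term. rewrite H, Nat.eqb_refl. unfold Rdiv. ring. Qed.

Lemma partial_sum_delta_le r s N : (forall i, (i < N)%nat -> r i = s i) ->
  forall K, sum_f_R0 (delta_term r s) K <= Rmax 0 ((1/2)^N - (1/2)^(S K)).
Proof.
  intros H K. induction K as [|K IH]; simpl sum_f_R0.
  - destruct N as [|N].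
    + pose proof (delta_term_le r s 0). simpl in *. eapply Rle_trans; [|apply Rmax_r]. lra.
    + rewrite delta_term_eq by (apply H; lia). apply Rmax_l.
  - destruct (Nat.lt_ge_cases (S K) N) as [Hl|Hg].
    + rewrite delta_term_eq, Rplus_0_r by (apply H; lia).
      eapply Rle_trans; [exact IH|]. apply Rle_max_compat_l.
      pose proof (half_pow_le (S K) (S (S K)) ltac:(lia)). lra.
    + pose proof (delta_term_le r s (S K)) as Ht.
      pose proof (half_pow_le N (S K) Hg) as Hm.
      rewrite Rmax_right in IH by lra. eapply Rle_trans; [|apply Rmax_r].
      replace ((1/2)^(S (S K))) with ((1/2)^(S K) * (1/2)) in * by (simpl; ring). lra.
Qed.

Lemma d_alpha_le r s N : (forall i, (i < N)%nat -> r i = s i) -> d_alpha r s <= (1/2)^N.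
Proof.
  intro H. unfold d_alpha.
  destruct (Rseries_CV_comp _ _ (delta_term_bound r s) geom_half_cv) as [l Hl]. simpl.
  apply Rnot_lt_le. intro Hlt.
  destruct (Hl (l - (1/2)^N) ltac:(lra)) as [K HK]. specialize (HK K (Nat.le_refl K)).
  unfold R_dist in HK. apply Rabs_def2 in HK.
  pose proof (partial_sum_delta_le r s N H K) as Hs.
  pose proof (half_pow_pos (S K)). pose proof (half_pow_pos N).
  assert (sum_f_R0 (delta_term r s) K <= (1/2)^N) by (eapply Rle_trans; [exact Hs | apply Rmax_lub; lra]).
  lra.
Qed.

Section OrbitClasses.
Variables (X L : Type) (d : X -> X -> R) (f : L -> X -> X).
Hypothesis Hd : is_metric d.
Hypothesis Hcont : forall lam, continuous_map d d (f lam).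
Hypothesis Hmin : ifs_minimal d f.

Let d_refl x : d x x = 0 := proj2 (metric_eq0 d Hd x x) eq_refl.
Let d_sym := metric_sym d Hd.
Let d_triangle := metric_triangle d Hd.

Definition closed_set (C : X -> Prop) : Prop :=
  forall y, (forall eps, eps > 0 -> exists z, C z /\ d z y < eps) -> C y.

Lemma compact_nested_inter (C : nat -> X -> Prop) : compact_space d ->
  (forall N, closed_set (C N)) -> (forall N y, C (S N) y -> C N y) ->
  (forall N, exists y, C N y) -> exists x, forall N, C N x.
Proof.
  intros Hcpt Hcl Hnest Hne. apply NNPP. intro Hempty.
  destruct (Hcpt nat (fun N y => ~ C N y)) as [l Hl].
  - intros N x Hx. apply NNPP. intro Ho. apply Hx, Hcl. intros eps Heps.
    apply NNPP. intro Hc. apply Ho. exists eps. split; [exact Heps|].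
    intros y Hy HCy. apply Hc. exists y. split; [exact HCy|]. rewrite d_sym. exact Hy.
  - intro x. apply NNPP. intro Hc. apply Hempty. exists x. intro N.
    apply NNPP. intro HN. apply Hc. exists N. exact HN.
  - destruct (Hne (list_max l)) as [z Hz]. destruct (Hl z) as [N [HNl HNz]].
    assert (Hdown : forall N N', (N <= N')%nat -> forall y, C N' y -> C N y)
      by (induction 1; auto).
    pose proof (proj1 (list_max_le l (list_max l)) (Nat.le_refl _)) as Hmax.
    rewrite Forall_forall in Hmax. exact (HNz (Hdown N _ (Hmax N HNl) z Hz)).
Qed.

Lemma iterF_ext (s1 s2 : nat -> L) n x :
  (forall i, (i < n)%nat -> s1 i = s2 i) -> iterF f s1 n x = iterF f s2 n x.
Proof. induction n as [|n IH]; intro H; simpl; [reflexivity|]. rewrite H, IH; auto. Qed.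

Definition orbit_class (b : X) (m k : nat) (y : X) : Prop :=
  forall eps, eps > 0 -> exists (sigma : nat -> L) (t : nat),
    (t mod m = k mod m)%nat /\ d (iterF f sigma t b) y < eps.

Lemma orbit_class_mod b m a c y : (a mod m = c mod m)%nat -> orbit_class b m a y -> orbit_class b m c y.
Proof.
  intros Hac H eps He. destruct (H eps He) as [s [t [Ht Hdt]]].
  exists s, t. split; [congruence | exact Hdt].
Qed.

Lemma orbit_class_iterF b m k s t : (t mod m = k mod m)%nat -> orbit_class b m k (iterF f s t b).
Proof. intros Ht eps He. exists s, t. split; [exact Ht|]. rewrite d_refl. lra. Qed.

Lemma orbit_class_closed b m k : closed_set (orbit_class b m k).
Proof.
  intros y H eps He. destruct (H (eps/2) ltac:(lra)) as [z [Hz Hzy]].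
  destruct (Hz (eps/2) ltac:(lra)) as [s [t [Ht Hdt]]].
  exists s, t. split; [exact Ht|]. pose proof (d_triangle (iterF f s t b) z y). lra.
Qed.

Lemma orbit_class_succ b m k y lam : orbit_class b m k y -> orbit_class b m (S k) (f lam y).
Proof.
  intros H eps He. destruct (Hcont lam y eps He) as [del [Hdel Hc]].
  destruct (H del Hdel) as [s [t [Ht Hdt]]].
  exists (fun i => if Nat.ltb i t then s i else lam), (S t). split.
  - rewrite <- (Nat.add_1_r t), <- (Nat.add_1_r k). apply mod_add_compat_r. exact Ht.
  - simpl. rewrite Nat.ltb_irrefl, (iterF_ext _ s).
    + rewrite d_sym. apply Hc. rewrite d_sym. exact Hdt.
    + intros i Hi. apply Nat.ltb_lt in Hi. rewrite Hi. reflexivity.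
Qed.

Lemma orbit_class_shift b m k y tau s : orbit_class b m k y -> orbit_class b m (k + s) (iterF f tau s y).
Proof.
  intro H. induction s as [|s IH]; simpl.
  - rewrite Nat.add_0_r. exact H.
  - rewrite Nat.add_succ_r. apply orbit_class_succ. exact IH.
Qed.

Lemma orbit_class_trans b m a c k y :
  orbit_class b m a c -> orbit_class c m k y -> orbit_class b m (a + k) y.
Proof.
  intros Hac Hcy. apply orbit_class_closed. intros eps He.
  destruct (Hcy eps He) as [s [t [Ht Hdt]]].
  exists (iterF f s t c). split; [|exact Hdt].
  apply (orbit_class_mod _ _ (a + t)); [rewrite !(Nat.add_comm a); apply mod_add_compat_r, Ht|].
  apply orbit_class_shift. exact Hac.
Qed.

Lemma orbit_class_mul b m k : orbit_class b m k b -> forall a, orbit_class b m (k * a) b.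
Proof.
  intros H a. induction a as [|a IH].
  - rewrite Nat.mul_0_r. destruct (H 1 ltac:(lra)) as [s _].
    apply (orbit_class_iterF b m 0 s 0). reflexivity.
  - rewrite Nat.mul_succ_r, Nat.add_comm. exact (orbit_class_trans _ _ _ _ _ _ H IH).
Qed.

Lemma orbit_class_divide b a m k y : Nat.divide a m -> orbit_class b m k y -> orbit_class b a k y.
Proof.
  intros Ham H eps He. destruct (H eps He) as [s [t [Ht Hdt]]].
  exists s, t. split; [exact (eq_mod_divide a m t k Ham Ht) | exact Hdt].
Qed.

(* Minimality puts y in the closure of the orbit of b; one residue class of times
   must then carry arbitrarily close approaches. *)
Lemma orbit_class_cover b m y : (1 <= m)%nat -> exists k, (k < m)%nat /\ orbit_class b m k y.
Proof.
  intro Hm.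
  destruct (pigeonhole_small m (fun j e => exists (s : nat -> L) t,
      (t mod m = j)%nat /\ d (iterF f s t b) y < e)) as [j [Hj Hq]].
  - intros j e e' [s [t [H1 H2]]] Hle. exists s, t. split; [exact H1 | lra].
  - intros e He. destruct (Hmin b y e He) as [s [t [_ Ht]]].
    exists (t mod m)%nat. split; [apply Nat.mod_upper_bound; lia | exists s, t; auto].
  - exists j. split; [exact Hj|]. intros e He. destruct (Hq e He) as [s [t [H1 H2]]].
    exists s, t. split; [rewrite H1, Nat.mod_small; auto | exact H2].
Qed.

(* Equivalently (period_class_unique), the m orbit classes of b are pairwise disjoint. *)
Definition is_period (b : X) (m : nat) : Prop :=
  (1 <= m)%nat /\ forall k, orbit_class b m k b -> (k mod m = 0)%nat.

Lemma is_period_one b : is_period b 1.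
Proof. split; [lia | intros; apply Nat.mod_1_r]. Qed.

Lemma period_class_unique b m j k y :
  is_period b m -> orbit_class b m j y -> orbit_class b m k y -> (j mod m = k mod m)%nat.
Proof.
  intros [Hm Hper] Hj Hk. destruct (orbit_class_cover y m b Hm) as [r [_ Hr]].
  pose proof (Hper _ (orbit_class_trans _ _ _ _ _ _ Hj Hr)) as H1.
  pose proof (Hper _ (orbit_class_trans _ _ _ _ _ _ Hk Hr)) as H2.
  apply (mod_add_cancel_r _ _ r). congruence.
Qed.

Lemma period_rebase b c m a k y :
  is_period b m -> orbit_class b m a c -> orbit_class b m (a + k) y -> orbit_class c m k y.
Proof.
  intros Hper Hc Hy. destruct (orbit_class_cover c m b (proj1 Hper)) as [r [_ Hr]].
  pose proof (proj2 Hper _ (orbit_class_trans _ _ _ _ _ _ Hc Hr)) as Har.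
  apply (orbit_class_mod _ _ (r + (a + k))); [|exact (orbit_class_trans _ _ _ _ _ _ Hr Hy)].
  replace (r + (a + k))%nat with (k + (a + r))%nat by lia.
  rewrite Nat.Div0.add_mod, Har, Nat.add_0_r, Nat.Div0.mod_mod. reflexivity.
Qed.

Lemma is_period_rebase b c m : is_period b m -> is_period c m.
Proof.
  intros Hper. split; [apply Hper|]. intros k Hk.
  destruct (orbit_class_cover b m c (proj1 Hper)) as [a [_ Ha]].
  pose proof (period_class_unique _ _ _ _ _ Hper (orbit_class_trans _ _ _ _ _ _ Ha Hk) Ha) as H.
  rewrite <- (Nat.add_0_r a) in H at 2. rewrite !(Nat.add_comm a) in H.
  apply mod_add_cancel_r in H. rewrite H. apply Nat.Div0.mod_0_l.
Qed.

Lemma period_class_open b m k y : is_period b m -> orbit_class b m k y ->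
  exists del, del > 0 /\ forall z, d y z < del -> orbit_class b m k z.
Proof.
  intros Hper Hy.
  destruct (ex_uniform_radius m (fun j e => forall z, d y z < e ->
      orbit_class b m j z -> (j mod m = k mod m)%nat)) as [e [He Hall]].
  - intros j e e' H [_ H2] z Hz. apply H. lra.
  - intros j Hj. destruct (classic (j mod m = k mod m)%nat) as [Heq|Hne].
    + exists 1. split; [lra | auto].
    + assert (Hnot : ~ orbit_class b m j y)
        by (intro Hc; apply Hne; exact (period_class_unique _ _ _ _ _ Hper Hc Hy)).
      apply NNPP. intro Hc. apply Hnot, orbit_class_closed. intros eps Heps.
      apply NNPP. intro Hc2. apply Hc. exists eps. split; [exact Heps|].
      intros z Hz HPz. exfalso. apply Hc2. exists z. split; [exact HPz|]. rewrite d_sym. exact Hz.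
  - exists e. split; [exact He|]. intros z Hz.
    destruct (orbit_class_cover b m z (proj1 Hper)) as [j [Hj HPj]].
    exact (orbit_class_mod _ _ j _ _ (Hall j Hj z Hz HPj) HPj).
Qed.

Lemma is_period_lcm b a c : is_period b a -> is_period b c -> is_period b (Nat.lcm a c).
Proof.
  intros [Ha Hpa] [Hc Hpc]. split.
  - destruct (Nat.eq_dec (Nat.lcm a c) 0) as [E|E]; [|lia]. apply Nat.lcm_eq_0 in E. lia.
  - intros k Hk. apply Nat.Lcm0.mod_divide, Nat.lcm_least; apply Nat.Lcm0.mod_divide.
    + apply Hpa. exact (orbit_class_divide _ _ _ _ _ (Nat.divide_lcm_l a c) Hk).
    + apply Hpc. exact (orbit_class_divide _ _ _ _ _ (Nat.divide_lcm_r a c) Hk).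
Qed.

Lemma is_period_divide b a m : is_period b m -> Nat.divide a m -> (1 <= a)%nat -> is_period b a.
Proof.
  intros [Hm Hper] Ham Ha. split; [exact Ha|]. intros k Hk.
  destruct (pigeonhole_small m (fun j e => (j mod a = k mod a)%nat /\
     exists (s : nat -> L) t, (t mod m = j)%nat /\ d (iterF f s t b) b < e)) as [j [Hj Hq]].
  - intros j e e' [H1 [s [t [H2 H3]]]] Hle. split; [exact H1|]. exists s, t. split; [exact H2 | lra].
  - intros e He. destruct (Hk e He) as [s [t [Ht Hdt]]].
    exists (t mod m)%nat. split; [apply Nat.mod_upper_bound; lia|].
    split; [rewrite mod_mod_divide; auto | exists s, t; auto].
  - assert (Hj0 : j = 0%nat).
    { rewrite <- (Nat.mod_small j m Hj). apply Hper. intros e He.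
      destruct (Hq e He) as [_ [s [t [H1 H2]]]]. exists s, t.
      split; [rewrite H1, Nat.mod_small; auto | exact H2]. }
    destruct (Hq 1 ltac:(lra)) as [H1 _]. rewrite <- H1, Hj0. apply Nat.Div0.mod_0_l.
Qed.

Lemma orbit_class_gcd b m k : (0 < k)%nat -> orbit_class b m k b -> orbit_class b m (Nat.gcd k m) b.
Proof.
  intros Hk H. destruct (Nat.gcd_bezout_pos k m Hk) as [a [c Hac]].
  apply (orbit_class_mod _ _ (k * a)); [|exact (orbit_class_mul _ _ _ H a)].
  rewrite Nat.mul_comm, Hac, Nat.Div0.mod_add. reflexivity.
Qed.

(* Returning to b after g steps lets every time t = g q be padded by g q (w - 1) steps
   into a multiple q m of m = g w. *)
Lemma orbit_class_zero_divide b g m y : (1 <= m)%nat -> Nat.divide g m ->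
  orbit_class b m g b -> orbit_class b g 0 y -> orbit_class b m 0 y.
Proof.
  intros Hm [w Hw] Hg Hy. apply orbit_class_closed. intros eps Heps.
  destruct (Hy eps Heps) as [s [t [Ht Hdt]]]. exists (iterF f s t b). split; [|exact Hdt].
  rewrite Nat.Div0.mod_0_l in Ht. apply Nat.Lcm0.mod_divide in Ht as [q ->].
  apply (orbit_class_mod _ _ (g * (q * (w - 1)) + q * g)).
  - rewrite Nat.Div0.mod_0_l. replace (g * (q * (w - 1)) + q * g)%nat with (q * m)%nat.
    + apply Nat.Div0.mod_mul.
    + subst m. destruct w; [lia|]. rewrite Nat.sub_succ, Nat.sub_0_r. nia.
  - apply orbit_class_shift, orbit_class_mul, Hg.
Qed.

Lemma ex_period_divide b m : (1 <= m)%nat -> exists e, is_period b e /\ Nat.divide e m /\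
  forall y, orbit_class b e 0 y -> orbit_class b m 0 y.
Proof.
  induction m as [m IH] using (well_founded_induction lt_wf). intros Hm.
  destruct (classic (is_period b m)) as [Hper|Hnper].
  { exists m. split; [exact Hper|]. split; [apply Nat.divide_refl | auto]. }
  assert (Hret : exists k, (0 < k < m)%nat /\ orbit_class b m k b).
  { apply NNPP. intro Hc. apply Hnper. split; [exact Hm|]. intros k Hk.
    apply NNPP. intro Hk0. apply Hc. exists (k mod m)%nat. split.
    - split; [lia | apply Nat.mod_upper_bound; lia].
    - apply (orbit_class_mod _ _ k); [rewrite Nat.Div0.mod_mod|]; auto. }
  destruct Hret as [k [Hk Hkb]].
  set (g := Nat.gcd k m).
  assert (Hgm : Nat.divide g m) by apply Nat.gcd_divide_r.
  assert (Hgk : (1 <= g <= k)%nat).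
  { split; [|apply Nat.divide_pos_le, Nat.gcd_divide_l; lia].
    destruct (Nat.eq_dec g 0) as [E|E]; [apply Nat.gcd_eq_0_l in E|]; lia. }
  destruct (IH g ltac:(lia) ltac:(lia)) as [e [He [Heg Hey]]].
  exists e. split; [exact He|]. split; [exact (Nat.divide_trans _ _ _ Heg Hgm)|].
  intros y Hy. apply (orbit_class_zero_divide b g m y Hm Hgm); [apply orbit_class_gcd; [lia | exact Hkb] | auto].
Qed.

Lemma orbit_class_zero_near x n m eps :
  (forall i (s : nat -> L), d (iterF f s (n * i) x) x < eps) -> Nat.divide n m ->
  forall y, orbit_class x m 0 y -> d y x <= eps.
Proof.
  intros Hn [w Hw] y Hy. apply Rnot_lt_le. intro Hlt.
  destruct (Hy (d y x - eps) ltac:(lra)) as [s [t [Ht Hdt]]].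
  rewrite Nat.Div0.mod_0_l in Ht. apply Nat.Lcm0.mod_divide in Ht as [q ->].
  specialize (Hn (q * w)%nat s). subst m. replace (n * (q * w))%nat with (q * (w * n))%nat in Hn by ring.
  pose proof (d_triangle y (iterF f s (q * (w * n)) x) x) as Htri. rewrite (d_sym y (iterF f s _ x)) in Htri. lra.
Qed.

Definition class_index (b : X) (m : nat) (x : X) : nat :=
  epsilon (inhabits 0%nat) (fun k => (k < m)%nat /\ orbit_class b m k x).

Lemma class_index_spec b m x : (1 <= m)%nat ->
  (class_index b m x < m)%nat /\ orbit_class b m (class_index b m x) x.
Proof.
  intro Hm. apply (epsilon_spec (inhabits 0%nat) (fun k => (k < m)%nat /\ _)).
  exact (orbit_class_cover b m x Hm).
Qed.

Lemma class_index_unique b m x k : is_period b m -> (k < m)%nat ->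
  orbit_class b m k x -> class_index b m x = k.
Proof.
  intros Hper Hk Hx. destruct (class_index_spec b m x (proj1 Hper)) as [H1 H2].
  pose proof (period_class_unique _ _ _ _ _ Hper H2 Hx) as H.
  rewrite !Nat.mod_small in H; auto.
Qed.

Lemma class_index_divide b a m x : is_period b a -> is_period b m -> Nat.divide a m ->
  class_index b a x = (class_index b m x mod a)%nat.
Proof.
  intros Ha Hm Ham. apply class_index_unique; [exact Ha | apply Nat.mod_upper_bound; pose proof (proj1 Ha); lia|].
  apply (orbit_class_mod _ _ (class_index b m x)); [rewrite Nat.Div0.mod_mod; reflexivity|].
  apply (orbit_class_divide _ _ m _ _ Ham), class_index_spec, Hm.
Qed.

Lemma class_index_succ b m x lam : is_period b m ->
  class_index b m (f lam x) = ((class_index b m x + 1) mod m)%nat.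
Proof.
  intro Hper. pose proof (proj1 Hper). apply class_index_unique; [exact Hper | apply Nat.mod_upper_bound; lia|].
  apply (orbit_class_mod _ _ (S (class_index b m x))); [rewrite Nat.Div0.mod_mod, Nat.add_1_r; reflexivity|].
  apply orbit_class_succ, class_index_spec. exact H.
Qed.

Lemma is_period_proper_multiple x0 (lam0 : L) : regularly_recurrent d f x0 -> ~ periodic_point f x0 ->
  forall E, is_period x0 E -> exists E', is_period x0 E' /\ Nat.divide E E' /\ (E < E')%nat.
Proof.
  intros Hrr Hnp E HE.
  set (y := iterF f (fun _ => lam0) E x0).
  assert (Hy : d y x0 > 0).
  { destruct (Rle_lt_or_eq_dec 0 (d y x0) (metric_nonneg d Hd y x0)) as [H|H]; [lra|].
    exfalso. apply Hnp. exists (fun _ => lam0), E. split; [apply HE|].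
    apply (metric_eq0 d Hd). auto. }
  destruct (Hrr (d y x0 / 2) ltac:(lra)) as [n [Hn1 Hn]].
  destruct (ex_period_divide x0 (E * n) ltac:(pose proof (proj1 HE); nia))
    as [e [He [_ Hincl]]].
  pose proof (is_period_lcm x0 E e HE He) as HEe.
  exists (Nat.lcm E e). split; [exact HEe|]. split; [apply Nat.divide_lcm_l|].
  pose proof (Nat.divide_pos_le E _ (proj1 HEe) (Nat.divide_lcm_l E e)).
  destruct (Nat.eq_dec E (Nat.lcm E e)) as [Eq|Neq]; [exfalso|lia].
  assert (Hye : orbit_class x0 e 0 y).
  { apply orbit_class_iterF. rewrite Nat.Div0.mod_0_l. apply Nat.Lcm0.mod_divide.
    rewrite Eq. apply Nat.divide_lcm_r. }
  pose proof (orbit_class_zero_near x0 n (E * n) _ (fun i s => Hn i s)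
    (Nat.divide_factor_r n E) y (Hincl y Hye)). lra.
Qed.

Section Coding.
Variables (x0 : X) (alpha : nat -> nat).
Hypothesis alpha_prime : forall i, is_prime_nat (alpha i).
Hypothesis alpha_period : forall N, is_period x0 (partial_prod alpha N).
Hypothesis alpha_cofinal : forall m, is_period x0 m -> exists N, Nat.divide m (partial_prod alpha N).

Local Notation M := (partial_prod alpha).

Let alpha_ge2 i : (2 <= alpha i)%nat := prime_nat_ge2 _ (alpha_prime i).
Let M_pos N : (1 <= M N)%nat := proj1 (alpha_period N).

Definition level (N : nat) (x : X) : nat := class_index x0 (M N) x.

Definition code (x : X) : nat -> nat := digit alpha (fun N => level N x).

Lemma level_spec N x : (level N x < M N)%nat /\ orbit_class x0 (M N) (level N x) x.
Proof. apply class_index_spec, M_pos. Qed.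

Lemma level_compat N x : level N x = (level (S N) x mod M N)%nat.
Proof. apply class_index_divide; auto. exists (alpha N). simpl. lia. Qed.

Lemma code_in_Delta x : in_Delta alpha (code x).
Proof.
  intro i. exact (digit_lt alpha _ (fun N => proj1 (level_spec N x)) i).
Qed.

Lemma level_zero x : level 0 x = 0%nat.
Proof. pose proof (proj1 (level_spec 0 x)). simpl in *. lia. Qed.

Lemma level_eq_of_code_eq x y : code y = code x -> forall N, level N y = level N x.
Proof.
  intros Hxy N. induction N as [|N IH]; [rewrite !level_zero; reflexivity|].
  rewrite (residue_S alpha _ (fun N => level_compat N y)), (residue_S alpha _ (fun N => level_compat N x)).
  fold (code y) (code x). rewrite Hxy, IH. reflexivity.
Qed.

Lemma level_eq_le x y N : level N y = level N x -> forall n, (n <= N)%nat -> level n y = level n x.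
Proof.
  intros H n Hn. induction Hn as [|N Hn IH]; [exact H|].
  apply IH. rewrite level_compat, H. symmetry. apply level_compat.
Qed.

Lemma code_continuous : continuous_map d d_alpha code.
Proof.
  intros x eps He. destruct (half_pow_small eps He) as [N HN].
  destruct (period_class_open x0 (M N) _ x (alpha_period N) (proj2 (level_spec N x)))
    as [del [Hdel Hball]].
  exists del. split; [exact Hdel|]. intros y Hy.
  assert (HN' : level N y = level N x)
    by (apply class_index_unique; [apply alpha_period | apply level_spec | exact (Hball y Hy)]).
  eapply Rle_lt_trans; [|exact HN]. apply d_alpha_le. intros i Hi.
  unfold code, digit. rewrite (level_eq_le x y N HN' (S i)); [reflexivity | lia].
Qed.

Lemma code_equivariant lam x : g_alpha alpha (code x) = code (f lam x).
Proof.
  apply functional_extensionality. intro i.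
  apply (digit_succ alpha _ alpha_ge2 (fun N => proj1 (level_spec N x)) (fun N => level_compat N x)).
  intro N. apply class_index_succ, alpha_period.
Qed.

Lemma code_surjective : compact_space d -> forall r, in_Delta alpha r -> exists x, code x = r.
Proof.
  intros Hcpt r Hr.
  destruct (residues_of_digits alpha r (fun i => Nat.lt_le_incl _ _ (alpha_ge2 i)) Hr) as [K [HK HKS]].
  destruct (Hmin x0 x0 1 ltac:(lra)) as [sigma _].
  destruct (compact_nested_inter (fun N => orbit_class x0 (M N) (K N)) Hcpt) as [x Hx].
  - intro N. apply orbit_class_closed.
  - intros N y Hy. apply (orbit_class_mod _ _ (K (S N))).
    + rewrite HKS, Nat.Div0.mod_add. reflexivity.
    + apply (orbit_class_divide _ _ (M (S N))); [exists (alpha N); simpl; lia | exact Hy].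
  - intro N. exists (iterF f sigma (K N) x0). apply orbit_class_iterF. reflexivity.
  - exists x. apply functional_extensionality. intro i.
    assert (Hlev : forall N, level N x = K N) by (intro N; apply class_index_unique; auto).
    pose proof (M_pos i). pose proof (HK i).
    unfold code, digit. cbv beta. rewrite Hlev, HKS, Nat.add_comm, Nat.div_add_l, Nat.div_small by lia.
    apply Nat.add_0_r.
Qed.

Lemma code_injective_at x : regularly_recurrent d f x -> forall y, code y = code x -> y = x.
Proof.
  intros Hrx y Hxy.
  assert (Hclose : forall eps, eps > 0 -> d y x <= eps).
  { intros eps He. destruct (Hrx eps He) as [n [Hn1 Hn]].
    destruct (ex_period_divide x n Hn1) as [e [He1 [He2 He3]]].
    destruct (alpha_cofinal e (is_period_rebase x x0 e He1)) as [N HeN].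
    pose proof (is_period_rebase x x0 e He1) as He0.
    assert (Hx : orbit_class x0 e (level N x) x)
      by exact (orbit_class_divide _ _ _ _ _ HeN (proj2 (level_spec N x))).
    assert (Hy : orbit_class x0 e (level N x + 0) y).
    { rewrite Nat.add_0_r, <- (level_eq_of_code_eq x y Hxy N).
      exact (orbit_class_divide _ _ _ _ _ HeN (proj2 (level_spec N y))). }
    exact (orbit_class_zero_near x n n eps Hn (Nat.divide_refl n) y
      (He3 y (period_rebase x0 x e _ 0 y He0 Hx Hy))). }
  apply (metric_eq0 d Hd). apply Rle_antisym; [|apply metric_nonneg, Hd].
  apply Rnot_lt_le. intro Hlt. pose proof (Hclose (d y x / 2) ltac:(lra)). lra.
Qed.
End Coding.
End OrbitClasses.

Theorem theorem4p6 (X L : Type) (d : X -> X -> R) (f : L -> X -> X)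
  (Hd : is_metric d) (Hcpt : compact_space d) (Hinf : infinite_type X)
  (HLfin : finite_type L) (HLne : inhabited L)
  (Hcont : forall lam, continuous_map d d (f lam))
  (Hmin : ifs_minimal d f)
  (Hrr : exists x0, regularly_recurrent d f x0 /\ ~ periodic_point f x0) :
  exists (alpha : nat -> nat) (pi : X -> nat -> nat),
    (forall i, is_prime_nat (alpha i)) /\
    (forall x, in_Delta alpha (pi x)) /\
    continuous_map d d_alpha pi /\
    (forall r, in_Delta alpha r -> exists x, pi x = r) /\
    (forall lam x, g_alpha alpha (pi x) = pi (f lam x)) /\
    (forall x, regularly_recurrent d f x -> forall y, pi y = pi x -> y = x).
Proof.
  destruct Hrr as [x0 [Hrr0 Hnp]]. destruct HLne as [lam0].
  destruct (ex_cofinal_chain (is_period X L d f x0)) as [D [HD0 [HDper [HDchain HDcof]]]].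
  - apply is_period_one.
  - intros a Ha. apply Ha.
  - apply is_period_lcm.
  - eapply is_period_proper_multiple; eauto.
  - destruct (ex_prime_refinement D HD0 HDchain) as [alpha [Hprime [Hsub Hcof]]].
    assert (Hper : forall N, is_period X L d f x0 (partial_prod alpha N)).
    { intro N. destruct (Hsub N) as [j Hj].
      apply (is_period_divide X L d f x0 _ (D j) (HDper j) Hj).
      apply partial_prod_pos. intro i. pose proof (prime_nat_ge2 _ (Hprime i)). lia. }
    assert (Hcofinal : forall m, is_period X L d f x0 m -> exists N, Nat.divide m (partial_prod alpha N)).
    { intros m Hm. destruct (HDcof m Hm) as [j Hj]. destruct (Hcof j) as [N HN].
      exists N. exact (Nat.divide_trans _ _ _ Hj HN). }
    exists alpha, (code X L d f x0 alpha).
    split; [exact Hprime|]. split; [|split; [|split; [|split]]].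
    + eapply code_in_Delta; eauto.
    + eapply code_continuous; eauto.
    + eapply code_surjective; eauto.
    + intros lam x. eapply code_equivariant; eauto.
    + intros x Hx y. eapply code_injective_at; eauto.
Qed.
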